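(* Let $\mathbf{a}_1,\mathbf{a}_2\in G$ with $\mathbf{a}_i\in G(t_i)$, where $t_i=\kappa_i+\kappa_i^{-1}$, $i=1,2$. (a) If $\mathbf{a}_1\mathbf{a}_2=\mathbf{d}(\lambda)$ with $\lambda\notin\{\pm1,\ \kappa_1\kappa_2,\ \kappa_1\kappa_2^{-1},\ \kappa_1^{-1}\kappa_2,\ \kappa_1^{-1}\kappa_2^{-1}\}$, then there exists $\mu\neq0$ such that $\mathbf{a}_1=\mathbf{h}^{\lambda}_{t_1,t_2}(-\lambda\mu)$ and $\mathbf{a}_2=\mathbf{h}^{\lambda}_{t_2,t_1}(\mu)$. (b) If $\mathbf{a}_1\mathbf{a}_2=\mathbf{d}(\kappa_1^{\epsilon_1}\kappa_2^{\epsilon_2})$ with $\epsilon_1,\epsilon_2\in\{\pm1\}$ and $\kappa_1^{\epsilon_1}\kappa_2^{\epsilon_2}\neq\pm1$, then either $\mathbf{a}_1=\mathbf{u}^+(\kappa_1^{\epsilon_1},-\kappa_1^{\epsilon_1}\alpha)$, $\mathbf{a}_2=\mathbf{u}^+(\kappa_2^{\epsilon_2},\kappa_2^{-\epsilon_2}\alpha)$ for some $\alpha\in\mathbb{C}$, or $\mathbf{a}_1=\mathbf{u}^-(\kappa_1^{\epsilon_1},-\kappa_1^{-\epsilon_1}\alpha)$, $\mathbf{a}_2=\mathbf{u}^-(\kappa_2^{\epsilon_2},\kappa_2^{\epsilon_2}\alpha)$ for some $\alpha\in\mathbb{C}$. (c) If $\mathbf{a}_1\mathbf{a}_2=-\mathbf{p}$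 and $t_1+t_2=0$, then $\mathbf{a}_1=\mathbf{u}^+(-\kappa_2^{-\epsilon},\xi)$ and $\mathbf{a}_2=\mathbf{u}^+(\kappa_2^{\epsilon},\xi+\kappa_2^{\epsilon})$ for some $\xi\in\mathbb{C}$ and $\epsilon\in\{\pm1\}$. (d) If $\mathbf{a}_1\mathbf{a}_2=-\mathbf{p}$ and $t_1+t_2\neq0$, then $\mathbf{a}_1=\mathbf{k}_{t_1,t_2}(\alpha+(t_1+t_2)/2)$ and $\mathbf{a}_2=\mathbf{k}_{t_2,t_1}(\alpha)$ for some $\alpha\in\mathbb{C}$. (e) Let $\tau=\mathrm{tr}(\mathbf{a}_1\mathbf{a}_2)$. Then the pair $(\mathbf{a}_1,\mathbf{a}_2)$ is reducible if and only if $\tau^2-t_1t_2\tau+t_1^2+t_2^2-4=0$.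
   Context: $G=\mathrm{SL}(2,\mathbb{C})$, $G(t)=\{\mathbf{x}\in G:\mathrm{tr}(\mathbf{x})=t\}$. A pair $(\mathbf{a},\mathbf{b})\in G\times G$ is reducible if $\mathbf{a},\mathbf{b}$ have a common eigenvector. Notation: $\mathbf{p}=\begin{pmatrix}1&1\\0&1\end{pmatrix}$, $\mathbf{d}(\lambda)=\begin{pmatrix}\lambda&0\\0&\lambda^{-1}\end{pmatrix}$, $\mathbf{u}^+(\kappa,\xi)=\begin{pmatrix}\kappa&\xi\\0&\kappa^{-1}\end{pmatrix}$, $\mathbf{u}^-(\kappa,\xi)=\begin{pmatrix}\kappa&0\\\xi&\kappa^{-1}\end{pmatrix}$. For $\lambda\neq\pm1$ and $\mu\neq0$, $\mathbf{h}^{\lambda}_{t_1,t_2}(\mu)=\frac{1}{\lambda-\lambda^{-1}}\begin{pmatrix}\lambda t_1-t_2&\mu\\ \delta\mu^{-1}& t_2-\lambda^{-1}t_1\end{pmatrix}$, where $\delta=(\lambda+\lambda^{-1})t_1t_2-t_1^2-t_2^2-(\lambda-\lambda^{-1})^2$ (symmetric in $t_1,t_2$). For $t_1+t_2\neq0$, $\mathbf{k}_{t_1,t_2}(\alpha)=\begin{pmatrix}\alpha+t_1/2&(t_1+t_2)^{-1}(t_1^2/4-1-\alpha^2)\\ t_1+t_2&-\alpha+t_1/2\end{pmatrix}$. *)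

From mathcomp Require Import all_boot all_order all_algebra.
From mathcomp Require Import complex.
From mathcomp Require Import reals.
Set Implicit Arguments. Unset Strict Implicit. Unset Printing Implicit Defensive.
Import Order.TTheory GRing.Theory Num.Theory.
Local Open Scope ring_scope.
Local Open Scope complex_scope.

Definition mx2 (C : nzRingType) (a b c d : C) : 'M[C]_2 :=
  \matrix_(i < 2, j < 2)
    if i == ord0 then (if j == ord0 then a else b)
    else (if j == ord0 then c else d).

Definition SL2 (C : comNzRingType) (x : 'M[C]_2) : Prop := \det x = 1.

Definition Gt (C : comNzRingType) (t : C) (x : 'M[C]_2) : Prop :=
  SL2 x /\ \tr x = t.

Definition mp (C : nzRingType) : 'M[C]_2 := mx2 1 1 0 1.
Definition md (C : fieldType) (l : C) : 'M[C]_2 := mx2 l 0 0 l^-1.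
Definition uplus (C : fieldType) (k xi : C) : 'M[C]_2 := mx2 k xi 0 k^-1.
Definition uminus (C : fieldType) (k xi : C) : 'M[C]_2 := mx2 k 0 xi k^-1.

Definition hdelta (C : fieldType) (l t1 t2 : C) : C :=
  (l + l^-1) * t1 * t2 - t1 ^+ 2 - t2 ^+ 2 - (l - l^-1) ^+ 2.

Definition hmx (C : fieldType) (l t1 t2 mu : C) : 'M[C]_2 :=
  (l - l^-1)^-1 *: mx2 (l * t1 - t2) mu (hdelta l t1 t2 * mu^-1) (t2 - l^-1 * t1).

Definition kmx (C : fieldType) (t1 t2 al : C) : 'M[C]_2 :=
  mx2 (al + t1 / 2%:R) ((t1 + t2)^-1 * (t1 ^+ 2 / 4%:R - 1 - al ^+ 2))
      (t1 + t2) (- al + t1 / 2%:R).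

Definition reducible (C : fieldType) (a b : 'M[C]_2) : Prop :=
  exists v : 'cV[C]_2, v != 0 /\
    (exists la : C, a *m v = la *: v) /\ (exists lb : C, b *m v = lb *: v).

From mathcomp Require Import all_boot all_order all_algebra.
From mathcomp Require Import complex.
From mathcomp Require Import reals.
From mathcomp Require Import ring.
Import GRing.Theory Num.Theory.
Local Open Scope ring_scope.

(* Since [det a1 = 1], the equation [a1 a2 = P] determines [a2 = adj(a1) P],
   so in (a)-(d) everything reduces to solving the two trace conditions for
   the entries of [a1]; apart from [+-1], where [h] is undefined, the values
   of [lambda] excluded in (a) are exactly those for which the (1,2)-entry
   of [a1] may vanish.  For (e), the commutator [K = a1 a2 - a2 a1] has
   [det K = 4 - t1^2 - t2^2 + t1 t2 tau - tau^2] on SL(2), and Cayley-Hamilton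
   gives [a K + K a = tr(a) K] for [a = a1, a2], so [ker K] is stable under
   both matrices: if [det K = 0] and [K <> 0] it is a common eigenline, while
   [K = 0] means that [a1] and [a2] commute. *)

Section Mx2.
Context {R : comNzRingType}.
Implicit Types a b c d e f g h x : R.

Lemma mx2_exists (A : 'M[R]_2) : exists a b c d, A = mx2 a b c d.
Proof.
exists (A 0 0), (A 0 1), (A 1 0), (A 1 1); apply/matrixP=> i j; rewrite !mxE.
by case: i => [[|[|//]] ?]; case: j => [[|[|//]] ?]; congr (A _ _); apply: val_inj.
Qed.

Lemma mulmx2 a b c d e f g h :
  mx2 a b c d *m mx2 e f g h =
  mx2 (a * e + b * g) (a * f + b * h) (c * e + d * g) (c * f + d * h).
Proof.
apply/matrixP=> i j; rewrite !mxE !big_ord_recl big_ord0 !mxE /=.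
by case: i => [[|[|//]] ?]; case: j => [[|[|//]] ?]; rewrite /= addr0.
Qed.

Lemma addmx2 a b c d e f g h :
  mx2 a b c d + mx2 e f g h = mx2 (a + e) (b + f) (c + g) (d + h).
Proof. by apply/matrixP=> i j; rewrite !mxE; case: (i == 0); case: (j == 0). Qed.

Lemma oppmx2 a b c d : - mx2 a b c d = mx2 (- a) (- b) (- c) (- d).
Proof. by apply/matrixP=> i j; rewrite !mxE; case: (i == 0); case: (j == 0). Qed.

Lemma scalemx2 x a b c d : x *: mx2 a b c d = mx2 (x * a) (x * b) (x * c) (x * d).
Proof. by apply/matrixP=> i j; rewrite !mxE; case: (i == 0); case: (j == 0). Qed.

Lemma scalar_mx2 x : x%:M = mx2 x 0 0 x.
Proof.
by apply/matrixP=> i j; rewrite !mxE; case: i => [[|[|//]] ?]; case: j => [[|[|//]] ?].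
Qed.

Lemma det_mx2 a b c d : \det (mx2 a b c d) = a * d - b * c.
Proof.
rewrite (expand_det_row _ 0) !big_ord_recl big_ord0 /cofactor !mxE /=.
by rewrite !det_mx11 !mxE /= /bump /= expr0 expr1 mul1r addr0 mulN1r mulrN.
Qed.

Lemma tr_mx2 a b c d : \tr (mx2 a b c d) = a + d.
Proof. by rewrite /mxtrace !big_ord_recl big_ord0 !mxE /= addr0. Qed.

Lemma mul_adj_mx2 a b c d : mx2 d (- b) (- c) a *m mx2 a b c d = (a * d - b * c)%:M.
Proof. by rewrite mulmx2 scalar_mx2; congr mx2; ring. Qed.

Lemma SL2_mulmx_solve {a b c d} {B P : 'M[R]_2} : a * d - b * c = 1 ->
  mx2 a b c d *m B = P -> B = mx2 d (- b) (- c) a *m P.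
Proof. by move=> detA <-; rewrite mulmxA mul_adj_mx2 detA mul1mx. Qed.

Lemma sqr_mx2 (A : 'M[R]_2) : A *m A = \tr A *: A - (\det A)%:M.
Proof.
have [a [b [c [d ->]]]] := mx2_exists A.
by rewrite mulmx2 tr_mx2 det_mx2 scalemx2 scalar_mx2 oppmx2 addmx2; congr mx2; ring.
Qed.

Lemma det_commutator_mx2 (A B : 'M[R]_2) :
  let tau := \tr (A *m B) in
  \det (A *m B - B *m A) = 4%:R * \det A * \det B - \det B * \tr A ^+ 2
    - \det A * \tr B ^+ 2 + \tr A * \tr B * tau - tau ^+ 2.
Proof.
have [a [b [c [d ->]]]] := mx2_exists A; have [e [f [g [h ->]]]] := mx2_exists B.
by rewrite /= !mulmx2 oppmx2 addmx2 !det_mx2 !tr_mx2; ring.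
Qed.

Lemma anticomm_commutator_mx2 (A B : 'M[R]_2) :
  A *m (A *m B - B *m A) + (A *m B - B *m A) *m A = \tr A *: (A *m B - B *m A).
Proof.
rewrite mulmxBr mulmxBl !mulmxA addrA subrK -[B *m A *m A]mulmxA sqr_mx2.
rewrite mulmxBl mulmxBr -scalemxAl -scalemxAr mul_scalar_mx mul_mx_scalar.
by rewrite scalerBr opprB addrA subrK.
Qed.

End Mx2.

Section ColumnKernel.
Context {F : fieldType}.

Lemma det0_cVP n (M : 'M[F]_n) :
  reflect (exists2 v : 'cV_n, v != 0 & M *m v = 0) (\det M == 0).
Proof.
rewrite -det_tr; apply: (iffP det0P) => [] [v v0 Mv].
  by exists v^T; rewrite ?trmx_eq0 // -[M]trmxK -trmx_mul Mv trmx0.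
by exists v^T; rewrite ?trmx_eq0 // -trmx_mul Mv trmx0.
Qed.

Lemma ker_mx2_colinear {M : 'M[F]_2} {v w : 'cV_2} : M != 0 -> v != 0 ->
  M *m v = 0 -> M *m w = 0 -> exists mu, w = mu *: v.
Proof.
move=> M0 v0 Mv Mw.
have inK (u : 'cV_2) : M *m u = 0 -> (u^T <= kermx M^T)%MS.
  by move=> Mu; apply/sub_kermxP; rewrite -trmx_mul Mu trmx0.
have rankK : (\rank (kermx M^T) <= 1)%N.
  by rewrite mxrank_ker mxrank_tr leq_subLR addn1 ltnS lt0n mxrank_eq0.
have rank_v : \rank v^T = 1%N by rewrite rank_rV trmx_eq0 v0.
have Kv : (kermx M^T <= v^T)%MS.
  have := mxrankS (inK v Mv); rewrite rank_v => rankK_ge.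
  by rewrite -(mxrank_leqif_sup (inK v Mv)) rank_v eqn_leq rankK_ge rankK.
have /sub_rVP[mu wv] := submx_trans (inK w Mw) Kv.
by exists mu; rewrite -[w]trmxK wv linearZ /= trmxK.
Qed.

End ColumnKernel.

Section Reducible.
Context {F : closedFieldType}.
Implicit Types A B : 'M[F]_2.

Lemma eigenvector_exists {n} (A : 'M[F]_n.+1) :
  exists2 v : 'cV_n.+1, v != 0 & exists l, A *m v = l *: v.
Proof.
have /closed_rootP[l] : size (char_poly A^T) != 1%N by rewrite size_char_poly.
rewrite -eigenvalue_root_char => /eigenvalueP[u uA u0].
by exists u^T; rewrite ?trmx_eq0 //; exists l; rewrite -[A]trmxK -trmx_mul uA linearZ.
Qed.

Lemma commuting_reducible A B : A *m B = B *m A -> reducible A B.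
Proof.
move=> AB; have [v v0 [l Av]] := eigenvector_exists A.
have [->|Al] := eqVneq A l%:M.
  have [w w0 Bw] := eigenvector_exists B.
  by exists w; split=> //; split=> //; exists l; rewrite mul_scalar_mx.
have N0 : A - l%:M != 0 by rewrite subr_eq0.
have Nv : (A - l%:M) *m v = 0 by rewrite mulmxBl Av mul_scalar_mx subrr.
have NBv : (A - l%:M) *m (B *m v) = 0.
  by rewrite mulmxA mulmxBl AB -scalar_mxC -mulmxBr -mulmxA Nv mulmx0.
have [mu Bv] := ker_mx2_colinear N0 v0 Nv NBv.
by exists v; split=> //; split; [exists l | exists mu].
Qed.

Lemma reducible_det_commutator A B :
  reducible A B <-> \det (A *m B - B *m A) = 0.
Proof.
set K := A *m B - B *m A; split.
  case=> v [v0 [[la Av] [lb Bv]]]; apply/eqP/det0_cVP; exists v => //.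
  by rewrite /K mulmxBl -!mulmxA Bv Av -!scalemxAr Av Bv !scalerA mulrC subrr.
move/eqP/det0_cVP=> [w w0 Kw].
have [K0|K0] := eqVneq K 0.
  by apply: commuting_reducible; apply/eqP; rewrite -subr_eq0 -/K K0.
have ker_stable C : C *m K + K *m C = \tr C *: K -> exists l, C *m w = l *: w.
  move=> CK; apply: (ker_mx2_colinear K0 w0 Kw).
  rewrite mulmxA -[K *m C](addKr (C *m K)) CK mulmxDl mulNmx -!mulmxA Kw.
  by rewrite -scalemxAl Kw mulmx0 scaler0 oppr0 addr0.
have [la Aw] := ker_stable A (anticomm_commutator_mx2 A B).
have [lb Bw] : exists lb, B *m w = lb *: w.
  apply: ker_stable; have := anticomm_commutator_mx2 B A.
  by rewrite -[B *m A - A *m B]opprB mulmxN mulNmx scalerN -opprD => /oppr_inj.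
by exists w; split=> //; split; [exists la | exists lb].
Qed.

Lemma SL2_reducibleE A B : SL2 A -> SL2 B ->
  let tau := \tr (A *m B) in
  reducible A B <->
  tau ^+ 2 - \tr A * \tr B * tau + \tr A ^+ 2 + \tr B ^+ 2 - 4%:R = 0.
Proof.
move=> detA detB tau; rewrite reducible_det_commutator det_commutator_mx2 detA detB -/tau.
set P := _ - 4%:R; have -> : 4%:R * 1 * 1 - 1 * \tr A ^+ 2 - 1 * \tr B ^+ 2
  + \tr A * \tr B * tau - tau ^+ 2 = - P by rewrite /P; ring.
by split=> E; [rewrite -[P]opprK E | rewrite E]; rewrite oppr0.
Qed.

End Reducible.

Section Factorisations.
Context {F : fieldType}.
Implicit Types (a b c d k l x y : F) (A B : 'M[F]_2).

Lemma inv_pair_eq {k x y} :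
  k != 0 -> x * y = 1 -> x + y = k + k^-1 -> x = k \/ x = k^-1.
Proof.
move=> k0 xy1 xyk.
have : (x - k) * (x - k^-1) = 0.
  have -> : (x - k) * (x - k^-1) =
            x * (x + y) - (k + k^-1) * x - (x * y - k * k^-1) by ring.
  by rewrite xyk xy1 mulfV // mulrC !subrr.
by move/eqP; rewrite mulf_eq0 !subr_eq0 => /orP[] /eqP; [left | right].
Qed.

Lemma sqr_sub1_neq0 {l} : l != 1 -> l != -1 -> l * l - 1 != 0.
Proof.
move=> l1 lN1; have -> : l * l - 1 = (l - 1) * (l + 1) by ring.
by rewrite mulf_neq0 // ?subr_eq0 // addr_eq0.
Qed.

Lemma SL2_factor_md {a b c d l B} : a * d - b * c = 1 ->
  mx2 a b c d *m B = md l -> B = mx2 (d * l) (- b / l) (- c * l) (a / l).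
Proof. by move=> detA /(SL2_mulmx_solve detA) ->; rewrite mulmx2; congr mx2; ring. Qed.

Lemma SL2_factor_opp_mp {a b c d B} : a * d - b * c = 1 ->
  mx2 a b c d *m B = - mp F -> B = mx2 (- d) (b - d) c (c - a).
Proof.
by move=> detA /(SL2_mulmx_solve detA) ->; rewrite /mp oppmx2 mulmx2; congr mx2; ring.
Qed.

Lemma SL2_factors_md k1 k2 l A B :
  k1 != 0 -> k2 != 0 -> Gt (k1 + k1^-1) A -> Gt (k2 + k2^-1) B ->
  l != 1 -> l != -1 -> l != k1 * k2 -> l != k1 * k2^-1 ->
  l != k1^-1 * k2 -> l != k1^-1 * k2^-1 -> A *m B = md l ->
  exists mu, mu != 0 /\ A = hmx l (k1 + k1^-1) (k2 + k2^-1) (- l * mu) /\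
                        B = hmx l (k2 + k2^-1) (k1 + k1^-1) mu.
Proof.
have [a [b [c [d ->]]]] := mx2_exists A.
move=> k1_0 k2_0 [detA trA] [detB trB] l1 lN1 lk1 lk2 lk3 lk4 AB.
move: detA trA; rewrite /SL2 det_mx2 tr_mx2 => detA trA.
move: detB trB; rewrite (SL2_factor_md detA AB) /SL2 det_mx2 tr_mx2 => detB trB.
have l0 : l != 0.
  apply: contra_eq_neq detB => ->.
  by rewrite invr0 !(mulr0, mul0r, subr0) eq_sym oner_neq0.
have b0 : b != 0.
  apply/eqP=> b0; move: detA detB trB.
  rewrite b0 !(mul0r, mulr0, oppr0, subr0) => ad1 adl1 trB.
  have : a * (d * l) \in [:: k1 * k2; k1 * k2^-1; k1^-1 * k2; k1^-1 * k2^-1].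
    case: (inv_pair_eq k1_0 ad1 trA) => ->; case: (inv_pair_eq k2_0 adl1 trB) => ->;
    by rewrite !inE eqxx ?orbT.
  rewrite mulrA ad1 mul1r !inE.
  by rewrite (negbTE lk1) (negbTE lk2) (negbTE lk3) (negbTE lk4).
have ll1 := sqr_sub1_neq0 l1 lN1.
have Ec : c = (a * d - 1) / b by rewrite -detA; field.
exists (- b * (l - l^-1) / l); split.
  have -> : - b * (l - l^-1) / l = - b * (l * l - 1) / l ^+ 2 by field.
  by rewrite !mulf_neq0 ?oppr_eq0 ?invr_eq0 ?expf_neq0.
rewrite /hmx /hdelta !scalemx2 -trA -trB Ec.
by split; congr mx2; field; rewrite ?oppr_eq0 ?l0 ?ll1 ?b0.
Qed.

Lemma SL2_factors_md_special x y A B :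
  x != 0 -> y != 0 -> Gt (x + x^-1) A -> Gt (y + y^-1) B ->
  x * y != 1 -> x * y != -1 -> A *m B = md (x * y) ->
  (exists al, A = uplus x (- x * al) /\ B = uplus y (y^-1 * al)) \/
  (exists al, A = uminus x (- x^-1 * al) /\ B = uminus y (y * al)).
Proof.
have [a [b [c [d ->]]]] := mx2_exists A.
move=> x0 y0 [detA trA] [_ trB] l1 lN1 AB.
move: detA trA; rewrite /SL2 det_mx2 tr_mx2 => detA trA.
move: trB; rewrite (SL2_factor_md detA AB) tr_mx2 => trB.
have Ed : d = x^-1.
  have : (d - x^-1) * (x * y * (x * y) - 1) = 0.
    have := congr1 (fun t => x * y * (t - (y + y^-1))) trB; rewrite /= subrr mulr0 => <-.
    by rewrite -[a](addrK d) trA; field; rewrite x0 y0.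
  by move/eqP; rewrite mulf_eq0 (negbTE (sqr_sub1_neq0 l1 lN1)) orbF subr_eq0 => /eqP.
have Ea : a = x by rewrite -[a](addrK d) trA Ed addrK.
have /eqP : b * c = 0 by rewrite -[b * c](subKr (a * d)) detA Ea Ed mulfV // subrr.
rewrite mulf_eq0 => /orP[] /eqP bc0.
  right; exists (- c * x); rewrite /uminus Ea Ed bc0.
  by split; congr mx2; field; rewrite ?x0 ?y0.
left; exists (- b / x); rewrite /uplus Ea Ed bc0.
by split; congr mx2; field; rewrite ?x0 ?y0.
Qed.

Lemma SL2_factors_opp_mp_trace0 {k t A B} :
  k != 0 -> Gt t A -> Gt (k + k^-1) B -> t + (k + k^-1) = 0 -> A *m B = - mp F ->
  exists xi y, (y = k \/ y = k^-1) /\ A = uplus (- y^-1) xi /\ B = uplus y (xi + y).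
Proof.
have [a [b [c [d ->]]]] := mx2_exists A.
move=> k0 [detA trA] [_ trB] trAB AB.
move: detA trA; rewrite /SL2 det_mx2 tr_mx2 => detA trA.
move: trB; rewrite (SL2_factor_opp_mp detA AB) tr_mx2 => trB.
have c0 : c = 0 by rewrite -trAB -trA -trB; ring.
have ad1 : a * d = 1 by rewrite -detA c0 mulr0 subr0.
have d0 : d != 0 by apply: contra_eq_neq ad1 => ->; rewrite mulr0 eq_sym oner_neq0.
have Ea : a = d^-1 by apply: (mulIf d0); rewrite mulVf.
exists b, (- d); split.
  apply: (inv_pair_eq (y := - a) k0); first by rewrite mulrNN mulrC.
  by apply/eqP; rewrite -opprD addrC trA eq_sym -addr_eq0 addrC trAB.
by rewrite /uplus c0 Ea; split; congr mx2; field; rewrite ?oppr_eq0 ?d0 ?oner_eq0.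
Qed.

Lemma SL2_factors_opp_mp t1 t2 A B : 2%:R != 0 :> F ->
  Gt t1 A -> Gt t2 B -> t1 + t2 != 0 -> A *m B = - mp F ->
  exists al, A = kmx t1 t2 (al + (t1 + t2) / 2%:R) /\ B = kmx t2 t1 al.
Proof.
have [a [b [c [d ->]]]] := mx2_exists A.
move=> two0 [detA trA] [_ trB] t12 AB.
move: detA trA; rewrite /SL2 det_mx2 tr_mx2 => detA trA.
move: trB; rewrite (SL2_factor_opp_mp detA AB) tr_mx2 => trB.
have Ec : c = t1 + t2 by rewrite -trA -trB; ring.
have c0 : c != 0 by rewrite Ec.
have Eb : b = (a * d - 1) / c by rewrite -detA; field.
have Ed : d = t1 - a by rewrite -trA addrC addKr.
exists (a - t1 - t2 / 2%:R); rewrite /kmx Eb Ed Ec.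
have four0 : 4%:R != 0 :> F by rewrite (_ : 4%:R = 2%:R * 2%:R) ?mulf_neq0 // -natrM.
by split; congr mx2; field; rewrite ?two0 ?four0 ?[t2 + t1]addrC ?t12.
Qed.

Lemma expz_pm1_add_inv {k} {e : int} : k != 0 -> (e == 1) || (e == -1) ->
  k ^ e != 0 /\ k ^ e + (k ^ e)^-1 = k + k^-1.
Proof.
move=> k0 e1; split; first exact: expfz_neq0.
by case/orP: e1 => /eqP ->; rewrite ?expr1z ?exprN1 ?invrK // addrC.
Qed.

Lemma expz_pm1_of_inv_pair {k y} : y = k \/ y = k^-1 ->
  exists2 e : int, (e == 1) || (e == -1) & k ^ e = y.
Proof. by case=> ->; [exists 1 | exists (-1)]; rewrite ?expr1z ?exprN1. Qed.

End Factorisations.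

Local Open Scope complex_scope.

Theorem mainTheorem3 (R : realType) (a1 a2 : 'M[R[i]]_2) (k1 k2 : R[i]) :
  k1 != 0 -> k2 != 0 ->
  Gt (k1 + k1^-1) a1 -> Gt (k2 + k2^-1) a2 ->
  let t1 := k1 + k1^-1 in
  let t2 := k2 + k2^-1 in
  (* (a) *)
  (forall l : R[i],
     l != 1 -> l != -1 ->
     l != k1 * k2 -> l != k1 * k2^-1 -> l != k1^-1 * k2 -> l != k1^-1 * k2^-1 ->
     a1 *m a2 = md l ->
     exists mu : R[i], mu != 0 /\
       a1 = hmx l t1 t2 (- l * mu) /\ a2 = hmx l t2 t1 mu) /\
  (* (b) *)
  (forall e1 e2 : int, (e1 == 1) || (e1 == -1) -> (e2 == 1) || (e2 == -1) ->
     k1 ^ e1 * k2 ^ e2 != 1 -> k1 ^ e1 * k2 ^ e2 != -1 ->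
     a1 *m a2 = md (k1 ^ e1 * k2 ^ e2) ->
     (exists al : R[i],
        a1 = uplus (k1 ^ e1) (- k1 ^ e1 * al) /\
        a2 = uplus (k2 ^ e2) (k2 ^ (- e2) * al)) \/
     (exists al : R[i],
        a1 = uminus (k1 ^ e1) (- k1 ^ (- e1) * al) /\
        a2 = uminus (k2 ^ e2) (k2 ^ e2 * al))) /\
  (* (c) *)
  (a1 *m a2 = - mp R[i] -> t1 + t2 = 0 ->
     exists (xi : R[i]) (e : int), ((e == 1) || (e == -1)) /\
       a1 = uplus (- k2 ^ (- e)) xi /\ a2 = uplus (k2 ^ e) (xi + k2 ^ e)) /\
  (* (d) *)
  (a1 *m a2 = - mp R[i] -> t1 + t2 != 0 ->
     exists al : R[i],
       a1 = kmx t1 t2 (al + (t1 + t2) / 2%:R) /\ a2 = kmx t2 t1 al) /\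
  (* (e) *)
  (let tau := \tr (a1 *m a2) in
   reducible a1 a2 <->
   tau ^+ 2 - t1 * t2 * tau + t1 ^+ 2 + t2 ^+ 2 - 4%:R = 0).
Proof.
move=> k1_0 k2_0 GA GB t1 t2; rewrite {}/t1 {}/t2.
split; last split; last split; last split.
- by move=> l; apply: SL2_factors_md.
- move=> e1 e2 e1_pm e2_pm l1 lN1 AB.
  have [x0 tx] := expz_pm1_add_inv k1_0 e1_pm; have [y0 ty] := expz_pm1_add_inv k2_0 e2_pm.
  by rewrite -!invr_expz; apply: SL2_factors_md_special; rewrite ?tx ?ty.
- move=> AB t0; have [xi [y [ky [-> ->]]]] := SL2_factors_opp_mp_trace0 k2_0 GA GB t0 AB.
  have [e e_pm <-] := expz_pm1_of_inv_pair ky.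
  by exists xi, e; rewrite -invr_expz.
- by move=> AB t0; apply: SL2_factors_opp_mp; rewrite ?pnatr_eq0.
- by case: GA GB => [detA <-] [detB <-]; apply: SL2_reducibleE.
Qed.
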